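(* Let $T_{i,j,k}$ be the solution of the $T$-system with the $2\times2$ periodic initial data $t_{i,j}$ ($t_{i,j}=a$ if $i,j$ even, $b$ if $i,j$ odd, $c$ if $i$ even and $j$ odd, $d$ if $i$ odd and $j$ even, with $a,b,c,d>0$). For $k\ge1$ and $i+j+k\equiv 0\pmod 2$ let $L_{i,j,k}=\frac{T_{i+1,j,k}T_{i-1,j,k}}{T_{i,j,k+1}T_{i,j,k-1}}$ and $R_{i,j,k}=1-L_{i,j,k}$. Then with $e_1=(2,0,0)$, $e_2=(0,2,0)$, $e_3=(1,1,2)$, $$L_{(i,j,k)+me_1+ne_2+pe_3}=L_{i,j,k},\qquad R_{(i,j,k)+me_1+ne_2+pe_3}=R_{i,j,k}$$ for all $m,n\in\mathbb{Z}$, $p\ge0$.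
   Context: The $T$-system is $T_{i,j,k+1}T_{i,j,k-1}=T_{i+1,j,k}T_{i-1,j,k}+T_{i,j+1,k}T_{i,j-1,k}$ for $k\ge1$, on points $(i,j,k)\in\mathbb{Z}^2\times\mathbb{Z}_{\ge0}$ with $i+j+k\equiv 1\pmod 2$, with initial data $T_{i,j,(i+j+1\bmod 2)}=t_{i,j}$. One has $R_{i,j,k}=\frac{T_{i,j+1,k}T_{i,j-1,k}}{T_{i,j,k+1}T_{i,j,k-1}}$ by the $T$-system. *)

From HB Require Import structures.
From mathcomp Require Import all_boot all_order all_algebra.
Set Implicit Arguments. Unset Strict Implicit. Unset Printing Implicit Defensive.
Import Order.TTheory GRing.Theory Num.Theory.
Local Open Scope ring_scope.

Definition zodd (z : int) : bool := odd (absz z).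

Definition tinit (R : Type) (a b c d : R) (i j : int) : R :=
  if zodd i then (if zodd j then b else d)
  else (if zodd j then c else a).

(* Tlayers t k = (layer k, layer k+1) of the T-system solution.
   Layer 0 and layer 1 are the initial data t (only the points with
   i+j+k odd are meaningful); layer k+2 is given by the T-system
   T_{i,j,k+2} = (T_{i+1,j,k+1}T_{i-1,j,k+1}+T_{i,j+1,k+1}T_{i,j-1,k+1})/T_{i,j,k}. *)
Fixpoint Tlayers (R : fieldType) (t : int -> int -> R) (k : nat)
  : (int -> int -> R) * (int -> int -> R) :=
  match k with
  | 0%N => (t, t)
  | k'.+1 =>
      let P := (Tlayers t k').1 in
      let Q := (Tlayers t k').2 in
      (Q, fun i j => (Q (i + 1) j * Q (i - 1) j + Q i (j + 1) * Q i (j - 1)) / P i j)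
  end.

Definition Tsys (R : fieldType) (t : int -> int -> R) (i j : int) (k : nat) : R :=
  (Tlayers t k).1 i j.

Definition Lsys (R : fieldType) (t : int -> int -> R) (i j : int) (k : nat) : R :=
  Tsys t (i + 1) j k * Tsys t (i - 1) j k / (Tsys t i j k.+1 * Tsys t i j k.-1).

Definition Rsys (R : fieldType) (t : int -> int -> R) (i j : int) (k : nat) : R :=
  1 - Lsys t i j k.

From HB Require Import structures.
From mathcomp Require Import all_boot all_order all_algebra.
From mathcomp Require Import zify ring.
Set Implicit Arguments. Unset Strict Implicit. Unset Printing Implicit Defensive.
Import Order.TTheory GRing.Theory Num.Theory.
Local Open Scope ring_scope.

(* For 2x2-periodic initial data the value T_{i,j,k} on the
   sublattice i+j+k odd depends only on k and on the parity of i: layer k is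
   a pair (u_k, v_k) (values at even / odd i), with (u_0,v_0) = (c,d),
   (u_1,v_1) = (a,b) and, by the T-system,
       (u_{k+2}, v_{k+2}) = (s/u_k, s/v_k),   s = u_{k+1}^2 + v_{k+1}^2
   ([layerSS], [Tsys_layer]).  Consequently L_{i,j,k+1} is the ratio
   v_{k+1}^2/s (i even) or u_{k+1}^2/s (i odd) ([Lsys_layer]).  Since
   layer k+3 is proportional to (1/u_{k+1}, 1/v_{k+1}), passing from k+1 to
   k+3 exchanges the two ratios ([lratio_inv], [lratio_next2]), which is
   exactly compensated by the shift of i by one in e_3 = (1,1,2); the
   shifts by e_1, e_2 preserve the parity of i.  Positivity of a,b,c,d keeps
   every layer positive ([layer_pos]), so no division by zero occurs. *)

Lemma zoddD (x y : int) : zodd (x + y) = zodd x (+) zodd y.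
Proof.
rewrite /zodd.
case: (boolP (odd (absz x))); case: (boolP (odd (absz y)));
  case: (boolP (odd (absz (x + y)))) => /=; lia.
Qed.

Lemma zoddn (n : nat) : zodd n%:Z = odd n.
Proof. by []. Qed.

Lemma zodd2 (m : int) : zodd (2 * m) = false.
Proof. by rewrite /zodd; apply/negbTE/negP; lia. Qed.

Lemma Tsys0 (R : fieldType) (t : int -> int -> R) (i j : int) :
  Tsys t i j 0 = t i j.
Proof. by []. Qed.

Lemma Tsys1 (R : fieldType) (t : int -> int -> R) (i j : int) :
  Tsys t i j 1 = t i j.
Proof. by []. Qed.

Lemma Tsys_rec (R : fieldType) (t : int -> int -> R) (i j : int) (k : nat) :
  Tsys t i j k.+2 =
  (Tsys t (i + 1) j k.+1 * Tsys t (i - 1) j k.+1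
   + Tsys t i (j + 1) k.+1 * Tsys t i (j - 1) k.+1) / Tsys t i j k.
Proof. by []. Qed.

Section Layers.

Variable R : fieldType.
Implicit Types (p q : R * R).

Definition sel (i : int) p : R := if zodd i then p.2 else p.1.

Definition next p q : R * R :=
  let s := q.1 ^+ 2 + q.2 ^+ 2 in (s / p.1, s / p.2).

Variables a b c d : R.

Fixpoint layers (k : nat) : (R * R) * (R * R) :=
  match k with
  | 0%N => ((c, d), (a, b))
  | k'.+1 => ((layers k').2, next (layers k').1 (layers k').2)
  end.

Definition layer (k : nat) : R * R := (layers k).1.

Lemma layerSS (k : nat) : layer k.+2 = next (layer k) (layer k.+1).
Proof. by []. Qed.

(* The T-system step, read on a 2-periodic layer: neighbours in the
   i-direction have the other parity, neighbours in the j-direction the same. *)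
Lemma sel_next (i : int) p q :
  (sel (i + 1) q * sel (i - 1) q + sel i q * sel i q) / sel i p
  = sel i (next p q).
Proof.
rewrite /sel /next !zoddD /=.
by case: (zodd i) => /=; rewrite !expr2 // addrC.
Qed.

Lemma Tsys_layer (k : nat) (i j : int) :
  zodd (i + j + k%:Z) -> Tsys (tinit a b c d) i j k = sel i (layer k).
Proof.
pose P k := forall i j, zodd (i + j + k%:Z) ->
  Tsys (tinit a b c d) i j k = sel i (layer k).
suff /(_ k) [hk _] : forall k, P k /\ P k.+1 by exact: hk.
rewrite /P; elim=> [|{}k [IHk IHk1]].
  split=> i' j'; rewrite ?Tsys0 ?Tsys1 !zoddD /tinit /sel /=;
  by case: (zodd i'); case: (zodd j').
split=> // i' j' hodd; rewrite Tsys_rec layerSS -sel_next.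
by rewrite !IHk1 ?IHk //; move: hodd; rewrite !zoddD !zoddn /=;
  case: (zodd i'); case: (zodd j'); case: (odd k).
Qed.

(* The ratio L of a layer (u, v): v^2/(u^2+v^2) at even i, u^2/(u^2+v^2) at
   odd i (the numerator is the square of the neighbouring value). *)
Definition lratio (s : bool) p : R :=
  (if s then p.1 ^+ 2 else p.2 ^+ 2) / (p.1 ^+ 2 + p.2 ^+ 2).

Lemma Lsys_layer (i j : int) (k : nat) :
  ~~ zodd (i + j + k.+1%:Z) -> sel i (layer k) != 0 ->
  Lsys (tinit a b c d) i j k.+1 = lratio (zodd i) (layer k.+1).
Proof.
move=> heven hnz; rewrite /Lsys /= !Tsys_layer ?layerSS.
2-5: by move: heven; rewrite !zoddD !zoddn /=;
       case: (zodd i); case: (zodd j); case: (odd k).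
move: hnz; rewrite /sel /next /lratio !zoddD /=.
by case: (zodd i) => /= hnz; rewrite divfK.
Qed.

End Layers.

Section Positivity.

Variable R : numFieldType.
Implicit Types (p q : R * R).

Definition pos_pair p : bool := (0 < p.1) && (0 < p.2).

Lemma sel_gt0 (i : int) p : pos_pair p -> 0 < sel i p.
Proof. by case/andP => h1 h2; rewrite /sel; case: (zodd i). Qed.

Lemma sqr_sum_gt0 p : pos_pair p -> 0 < p.1 ^+ 2 + p.2 ^+ 2.
Proof. by case/andP => h1 h2; rewrite addr_gt0 // exprn_gt0. Qed.

Lemma next_pos p q : pos_pair p -> pos_pair q -> pos_pair (next p q).
Proof.
move=> /andP [hp1 hp2] hq; have hs := sqr_sum_gt0 hq.
by rewrite /pos_pair /= !divr_gt0.
Qed.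

Lemma layer_pos (a b c d : R) (k : nat) :
  0 < a -> 0 < b -> 0 < c -> 0 < d -> pos_pair (layer a b c d k).
Proof.
move=> ha hb hc hd.
suff /(_ k) [] : forall k, pos_pair (layer a b c d k) /\
                           pos_pair (layer a b c d k.+1) by [].
elim=> [|{}k [IHk IHk1]]; first by rewrite /pos_pair /= ha hb hc hd.
by split=> //; rewrite layerSS next_pos.
Qed.

Lemma lratio_inv (s : bool) (e x y : R) :
  e != 0 -> x != 0 -> y != 0 -> x ^+ 2 + y ^+ 2 != 0 ->
  lratio s (e / x, e / y) = lratio (~~ s) (x, y).
Proof.
move=> he hx hy hs; rewrite /lratio /=.
have hs' : (e * y) ^+ 2 + (e * x) ^+ 2 != 0.
  by rewrite !exprMn -mulrDr addrC mulf_neq0 ?expf_neq0.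
by case: s => /=; field; rewrite hs hx hy hs'.
Qed.

(* Two steps of the layer recursion exchange the two ratios, since
   layer k+3 = (s'/u_{k+1}, s'/v_{k+1}). *)
Lemma lratio_next2 (s : bool) p q : pos_pair p -> pos_pair q ->
  lratio (~~ s) (next q (next p q)) = lratio s q.
Proof.
move=> hp hq; have /andP [hq1 hq2] := hq.
rewrite [next q _]/next lratio_inv ?negbK //.
all: by rewrite lt0r_neq0 ?sqr_sum_gt0 ?next_pos.
Qed.

Lemma lratio_shift (a b c d : R) (s : bool) (k p : nat) :
  0 < a -> 0 < b -> 0 < c -> 0 < d ->
  lratio (s (+) odd p) (layer a b c d (k + 2 * p).+1) = lratio s (layer a b c d k.+1).
Proof.
move=> ha hb hc hd; elim: p => [|p IH]; first by rewrite addbF muln0 addn0.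
have -> : (k + 2 * p.+1).+1 = (k + 2 * p).+3 by lia.
by rewrite /= addbN layerSS lratio_next2 ?layer_pos.
Qed.

End Positivity.

Theorem mainTheorem4 (R : realFieldType) (a b c d : R)
  (ha : 0 < a) (hb : 0 < b) (hc : 0 < c) (hd : 0 < d)
  (i j : int) (k : nat) (hk : (1 <= k)%N) (hpar : ~~ zodd (i + j + k%:Z))
  (m n : int) (p : nat) :
  let t := tinit a b c d in
  Lsys t (i + 2 * m + p%:Z) (j + 2 * n + p%:Z) (k + 2 * p)%N = Lsys t i j k /\
  Rsys t (i + 2 * m + p%:Z) (j + 2 * n + p%:Z) (k + 2 * p)%N = Rsys t i j k.
Proof.
move=> t; case: k hk hpar => [//|k] _ hpar.
have hL : Lsys t (i + 2 * m + p%:Z) (j + 2 * n + p%:Z) (k.+1 + 2 * p)%N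
          = Lsys t i j k.+1.
  have -> : (k.+1 + 2 * p = (k + 2 * p).+1)%N by lia.
  have hpar_shift : ~~ zodd (i + 2 * m + p%:Z + (j + 2 * n + p%:Z) + (k + 2 * p).+1%:Z).
    have -> : i + 2 * m + p%:Z + (j + 2 * n + p%:Z) + (k + 2 * p).+1%:Z
              = i + j + k.+1%:Z + 2 * (m + n + p%:Z + p%:Z) by rewrite -!addnS !PoszD; ring.
    by rewrite zoddD zodd2 addbF.
  rewrite !Lsys_layer ?lt0r_neq0 ?sel_gt0 ?layer_pos //.
  by rewrite !zoddD !zodd2 addbF lratio_shift.
by split=> //; rewrite /Rsys hL.
Qed.
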